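(* Let $f\in{\rm elh}(\mathbb{C})$ be non-polynomial and $g\in{\rm elh}(\mathbb{C})$, suppose there is $h_1\in{\rm elh}(\mathbb{C})$ with $h_1\neq g$ and $f\circ h_1=f\circ g$, and let $t(z),h(z),L(w)$ be entire functions with $f(g(z)+we^{t(z)})=f(g(z))+e^{L(w)+h(z)}\sin\pi w$ for all $(z,w)\in\mathbb{C}^2$. Then: (a) $L'(w)\sin\pi w+\pi\cos\pi w$ never vanishes; (b) the function $-h'(z)f(g(z)+we^{t(z)})+(g'(z)+wt'(z)e^{t(z)})f'(g(z)+we^{t(z)})$ is independent of $w$.
   Context: ${\rm elh}(\mathbb{C})$ denotes the set of entire functions with nowhere vanishing derivative and derivative $1$ at $0$. *)

From Stdlib Require Import Reals List.
From Coquelicot Require Export Coquelicot.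
Open Scope C_scope.

Definition cderiv (f : C -> C) (z l : C) : Prop :=
  @is_derive C_AbsRing C_NormedModule f z l.

Definition has_cderiv (f f' : C -> C) : Prop := forall z, cderiv f z (f' z).

Definition entire (f : C -> C) : Prop := forall z, exists l, cderiv f z l.

Definition elh (f : C -> C) : Prop :=
  exists f' : C -> C, has_cderiv f f' /\ (forall z, f' z <> 0) /\ f' 0 = 1.

Definition cexp (z : C) : C :=
  (exp (Re z) * cos (Im z), exp (Re z) * sin (Im z))%R.
Definition csin (z : C) : C := (cexp (Ci * z) - cexp (- (Ci * z))) / (2 * Ci).
Definition ccos (z : C) : C := (cexp (Ci * z) + cexp (- (Ci * z))) / 2.

Definition cPI : C := RtoC PI.

(* polynomial evaluation with coefficient list [a0; a1; ...] *)
Definition peval (l : list C) (z : C) : C :=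
  fold_right (fun a acc => a + z * acc) 0 l.

Definition is_polynomial (f : C -> C) : Prop :=
  exists l : list C, forall z, f z = peval l z.

From Stdlib Require Import Reals Lra.
From Coquelicot Require Import Coquelicot.

(* Differentiate the functional equation.  In [w] it gives
   [e^(t z) f'(g z + w e^(t z)) = e^(L w + h z) (L' w sin (pi w) + pi cos (pi w))],
   whose left side never vanishes: this is (a).  In [z] it gives
   [(g' z + w t' z e^(t z)) f'(g z + w e^(t z)) = g' z f'(g z) + h' z e^(L w + h z) sin (pi w)],
   and substituting the equation back for the last product leaves [g' z f'(g z) - h' z f (g z)]:
   this is (b). *)

Open Scope R_scope.

Lemma derivable_pt_lim_linear_approx f x l :
  derivable_pt_lim f x l -> forall eps, 0 < eps ->
  exists d, 0 < d /\ forall h, Rabs h < d -> Rabs (f (x + h) - f x - h * l) <= eps * Rabs h.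
Proof.
  intros Hf eps Heps. destruct (Hf eps Heps) as [d Hd].
  exists d. split; [apply cond_pos|]. intros h Hh.
  destruct (Req_dec h 0) as [->|Hh0].
  - rewrite Rplus_0_r, Rabs_R0. replace (f x - f x - 0 * l) with 0 by ring.
    rewrite Rabs_R0. lra.
  - replace (f (x + h) - f x - h * l) with (h * ((f (x + h) - f x) / h - l)) by (field; exact Hh0).
    rewrite Rabs_mult, Rmult_comm. apply Rmult_le_compat_r; [apply Rabs_pos|].
    left. exact (Hd h Hh0 Hh).
Qed.

Lemma Cmod_le_of_components x y r :
  Rabs x <= r -> Rabs y <= r -> Cmod (x, y) <= 2 * r.
Proof.
  intros Hx Hy. pose proof (Cmod_2Rmax (x, y)) as Hmax; simpl in Hmax.
  assert (Hsqrt2 : sqrt 2 <= 2).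
  { rewrite <- (sqrt_square 2) at 2 by lra. apply sqrt_le_1_alt. lra. }
  pose proof (Rmax_lub _ _ _ Hx Hy). pose proof (sqrt_pos 2).
  pose proof (Rle_trans _ _ _ (Rabs_pos x) Hx). nra.
Qed.

(* Via [exp a cos b - 1 - a = exp a (cos b - 1) + (exp a - 1 - a)] and
   [exp a sin b - b = (exp a - 1) sin b + (sin b - b)], each piece being o(|a| + |b|). *)
Lemma cexp_linear_approx_0 eps : 0 < eps ->
  exists d, 0 < d /\ forall z, Cmod z < d -> Cmod (cexp z - 1 - z) <= eps * Cmod z.
Proof.
  intros Heps. set (e := Rmin (eps / 10) 1).
  assert (He : 0 < e) by (apply Rmin_pos; lra).
  assert (He_eps : e <= eps / 10) by apply Rmin_l.
  assert (He1 : e <= 1) by apply Rmin_r.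
  destruct (derivable_pt_lim_linear_approx _ _ _ derivable_pt_lim_exp_0 e He) as [d1 [Hd1 Hexp]].
  destruct (derivable_pt_lim_linear_approx _ _ _ derivable_pt_lim_cos_0 e He) as [d2 [Hd2 Hcos]].
  destruct (derivable_pt_lim_linear_approx _ _ _ derivable_pt_lim_sin_0 e He) as [d3 [Hd3 Hsin]].
  exists (Rmin (Rmin d1 d2) (Rmin d3 e)). split; [repeat apply Rmin_pos; lra|].
  intros [a b] Hz. set (m := Cmod (a, b)) in *.
  pose proof (Rmax_Cmod (a, b)) as Hmax; simpl in Hmax. fold m in Hmax.
  assert (Ha : Rabs a <= m) by (eapply Rle_trans; [apply Rmax_l|exact Hmax]).
  assert (Hb : Rabs b <= m) by (eapply Rle_trans; [apply Rmax_r|exact Hmax]).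
  assert (Hm_d : m < d1 /\ m < d2 /\ m < d3 /\ m < e).
  { pose proof (Rmin_l (Rmin d1 d2) (Rmin d3 e)). pose proof (Rmin_r (Rmin d1 d2) (Rmin d3 e)).
    pose proof (Rmin_l d1 d2). pose proof (Rmin_r d1 d2).
    pose proof (Rmin_l d3 e). pose proof (Rmin_r d3 e). lra. }
  destruct Hm_d as [Hm1 [Hm2 [Hm3 Hme]]].
  specialize (Hexp a ltac:(lra)). specialize (Hcos b ltac:(lra)). specialize (Hsin b ltac:(lra)).
  rewrite Rplus_0_l, exp_0, Rmult_1_r in Hexp.
  rewrite Rplus_0_l, cos_0, Rmult_0_r, Rminus_0_r in Hcos.
  rewrite Rplus_0_l, sin_0, Rminus_0_r, Rmult_1_r in Hsin.
  pose proof (Rabs_pos a). pose proof (Rabs_pos b).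
  pose proof (Rabs_pos (exp a - 1)). pose proof (Rabs_pos (sin b)).
  assert (Hexp1 : Rabs (exp a - 1) <= 2 * Rabs a).
  { replace (exp a - 1) with ((exp a - 1 - a) + a) by ring.
    pose proof (Rabs_triang (exp a - 1 - a) a). nra. }
  assert (Hexp3 : exp a <= 3).
  { pose proof (Rle_abs (exp a - 1)). nra. }
  assert (Hsin2 : Rabs (sin b) <= 2 * Rabs b).
  { replace (sin b) with ((sin b - b) + b) by ring.
    pose proof (Rabs_triang (sin b - b) b). nra. }
  assert (Hre : Rabs (exp a * cos b - 1 - a) <= 5 * e * m).
  { replace (exp a * cos b - 1 - a) with (exp a * (cos b - 1) + (exp a - 1 - a)) by ring.
    pose proof (Rabs_triang (exp a * (cos b - 1)) (exp a - 1 - a)).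
    rewrite Rabs_mult, (Rabs_right (exp a)) in * by (left; apply exp_pos).
    pose proof (exp_pos a). pose proof (Rabs_pos (cos b - 1)). nra. }
  assert (Him : Rabs (exp a * sin b - b) <= 5 * e * m).
  { replace (exp a * sin b - b) with ((exp a - 1) * sin b + (sin b - b)) by ring.
    pose proof (Rabs_triang ((exp a - 1) * sin b) (sin b - b)).
    rewrite Rabs_mult in *. nra. }
  replace (cexp (a, b) - 1 - (a, b))%C with (exp a * cos b - 1 - a, exp a * sin b - b)%R
    by (unfold cexp; apply injective_projections; simpl; ring).
  eapply Rle_trans; [apply (Cmod_le_of_components _ _ _ Hre Him)|].
  pose proof (Cmod_ge_0 (a, b)) as Hm0; fold m in Hm0. nra.
Qed.

Open Scope C_scope.

Lemma cderiv_abs_ring f x l :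
  cderiv f x l <-> @is_derive C_AbsRing (AbsRing_NormedModule C_AbsRing) f x l.
Proof.
  split; intros [[Hadd Hscal Hbnd] Hlim]; repeat split; auto; exact Hlim.
Qed.

Lemma cderiv_of_linear_approx f x l :
  (forall eps, (0 < eps)%R -> exists d, (0 < d)%R /\ forall y,
     (Cmod (y - x) < d)%R -> (Cmod (f y - f x - (y - x) * l) <= eps * Cmod (y - x))%R) ->
  cderiv f x l.
Proof.
  intros Happrox. split; [apply is_linear_scal_l|].
  intros y Hy.
  apply (@is_filter_lim_locally_unique C_AbsRing (AbsRing_NormedModule C_AbsRing)) in Hy.
  subst y. intros eps.
  apply (@locally_norm_le_locally C_AbsRing (AbsRing_NormedModule C_AbsRing)).
  destruct (Happrox eps (cond_pos eps)) as [d [Hd Hy]].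
  exists (mkposreal d Hd). intros y Hyx. exact (Hy y Hyx).
Qed.

Lemma cderiv_unique f x a b : cderiv f x a -> cderiv f x b -> a = b.
Proof.
  intros Ha Hb. apply is_C_derive_unique in Ha. apply is_C_derive_unique in Hb. congruence.
Qed.

Lemma cderiv_val_eq f x a b : cderiv f x a -> a = b -> cderiv f x b.
Proof. now intros H <-. Qed.

Lemma cderiv_ext f g x l : (forall y, f y = g y) -> cderiv f x l -> cderiv g x l.
Proof. exact (is_derive_ext f g x l). Qed.

Lemma cderiv_const (c x : C) : cderiv (fun _ => c) x 0.
Proof. exact (is_derive_const c x). Qed.

Lemma cderiv_id x : cderiv (fun y => y) x 1.
Proof. apply cderiv_abs_ring. exact (@is_derive_id C_AbsRing x). Qed.

Lemma cderiv_plus f g x a b :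
  cderiv f x a -> cderiv g x b -> cderiv (fun y => f y + g y) x (a + b).
Proof. exact (is_derive_plus f g x a b). Qed.

Lemma cderiv_opp f x a : cderiv f x a -> cderiv (fun y => - f y) x (- a).
Proof. exact (is_derive_opp f x a). Qed.

Lemma cderiv_minus f g x a b :
  cderiv f x a -> cderiv g x b -> cderiv (fun y => f y - g y) x (a - b).
Proof. exact (is_derive_minus f g x a b). Qed.

Lemma cderiv_mult f g x a b :
  cderiv f x a -> cderiv g x b -> cderiv (fun y => f y * g y) x (a * g x + f x * b).
Proof.
  intros Hf Hg. apply cderiv_abs_ring.
  exact (is_derive_mult f g x a b (proj1 (cderiv_abs_ring _ _ _) Hf)
           (proj1 (cderiv_abs_ring _ _ _) Hg) Cmult_comm).
Qed.

Lemma cderiv_comp f g x a b :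
  cderiv f (g x) a -> cderiv g x b -> cderiv (fun y => f (g y)) x (b * a).
Proof.
  intros Hf Hg. exact (is_derive_comp f g x a b Hf (proj1 (cderiv_abs_ring _ _ _) Hg)).
Qed.

Lemma cderiv_scal_l c f x a : cderiv f x a -> cderiv (fun y => c * f y) x (c * a).
Proof.
  intros Hf. eapply cderiv_val_eq; [exact (cderiv_mult _ _ _ _ _ (cderiv_const c x) Hf)|cbv beta; ring].
Qed.

Lemma cderiv_affine a b x : cderiv (fun y => a + y * b) x b.
Proof.
  eapply cderiv_val_eq.
  - exact (cderiv_plus _ _ _ _ _ (cderiv_const a x)
             (cderiv_mult _ _ _ _ _ (cderiv_id x) (cderiv_const b x))).
  - cbv beta; ring.
Qed.

Lemma cexp_add a b : cexp (a + b) = cexp a * cexp b.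
Proof.
  destruct a as [a1 a2], b as [b1 b2]. unfold cexp; simpl.
  rewrite exp_plus, cos_plus, sin_plus. apply injective_projections; simpl; ring.
Qed.

Lemma cexp_0 : cexp 0 = 1.
Proof.
  unfold cexp; simpl. rewrite exp_0, cos_0, sin_0.
  apply injective_projections; simpl; ring.
Qed.

Lemma cexp_neq0 z : cexp z <> 0.
Proof.
  intros Hz. apply C1_nz.
  rewrite <- cexp_0. replace (RtoC 0) with (z + - z) by ring.
  rewrite cexp_add, Hz. ring.
Qed.

Lemma cderiv_cexp z : cderiv cexp z (cexp z).
Proof.
  apply cderiv_of_linear_approx. intros eps Heps.
  set (k := Cmod (cexp z)).
  assert (Hk : (0 < k)%R) by exact (proj1 (Cmod_gt_0 _) (cexp_neq0 z)).
  destruct (cexp_linear_approx_0 (eps / k)) as [d [Hd Happrox]].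
  { apply Rdiv_lt_0_compat; assumption. }
  exists d. split; [exact Hd|]. intros y Hyz.
  replace (cexp y - cexp z - (y - z) * cexp z)
    with (cexp z * (cexp (y - z) - 1 - (y - z))).
  2: { assert (Hy : cexp y = cexp z * cexp (y - z)).
       { rewrite <- cexp_add. f_equal. ring. }
       rewrite Hy. ring. }
  rewrite Cmod_mult. fold k.
  eapply Rle_trans; [apply Rmult_le_compat_l; [lra|exact (Happrox _ Hyz)]|].
  right. field. lra.
Qed.

Lemma cderiv_csin z : cderiv csin z (ccos z).
Proof.
  pose proof (cderiv_scal_l Ci _ _ _ (cderiv_id z)) as Hiz.
  pose proof (cderiv_comp _ _ _ _ _ (cderiv_cexp _) Hiz) as Hexp.
  pose proof (cderiv_comp _ _ _ _ _ (cderiv_cexp _) (cderiv_opp _ _ _ Hiz)) as Hexp_opp.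
  pose proof (cderiv_mult _ _ _ _ _ (cderiv_minus _ _ _ _ _ Hexp Hexp_opp)
                (cderiv_const (/ (2 * Ci)) z)) as H.
  eapply cderiv_val_eq; [exact H|].
  unfold ccos. field. exact Ci_nz.
Qed.

Section FunctionalEquation.

Variables f g t h L : C -> C.

Hypothesis feq : forall z w : C,
  f (g z + w * cexp (t z)) = f (g z) + cexp (L w + h z) * csin (cPI * w).

Lemma feq_cderiv_w f' L' z w : has_cderiv f f' -> has_cderiv L L' ->
  cexp (t z) * f' (g z + w * cexp (t z))
  = cexp (L w + h z) * (L' w * csin (cPI * w) + cPI * ccos (cPI * w)).
Proof.
  intros Hf HL.
  pose proof (cderiv_comp _ _ _ _ _ (Hf _) (cderiv_affine (g z) (cexp (t z)) w)) as Hlhs.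
  assert (Hrhs : cderiv (fun w => f (g z) + cexp (L w + h z) * csin (cPI * w)) w
                   (cexp (L w + h z) * (L' w * csin (cPI * w) + cPI * ccos (cPI * w)))).
  { eapply cderiv_val_eq.
    - apply cderiv_plus; [apply cderiv_const|].
      apply cderiv_mult.
      + apply (cderiv_comp cexp); [apply cderiv_cexp|].
        apply cderiv_plus; [apply HL|apply cderiv_const].
      + apply (cderiv_comp csin); [apply cderiv_csin|].
        apply cderiv_scal_l, cderiv_id.
    - cbv beta. ring. }
  apply (cderiv_ext _ _ _ _ (fun w => eq_sym (feq z w))) in Hrhs.
  exact (cderiv_unique _ _ _ _ Hlhs Hrhs).
Qed.

Lemma feq_cderiv_z f' g' h' t' z w :
  has_cderiv f f' -> has_cderiv g g' -> has_cderiv h h' -> has_cderiv t t' ->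
  (g' z + w * t' z * cexp (t z)) * f' (g z + w * cexp (t z))
  = g' z * f' (g z) + h' z * (cexp (L w + h z) * csin (cPI * w)).
Proof.
  intros Hf Hg Hh Ht.
  assert (Hinner : cderiv (fun z => g z + w * cexp (t z)) z (g' z + w * t' z * cexp (t z))).
  { eapply cderiv_val_eq.
    - apply cderiv_plus; [apply Hg|].
      apply cderiv_scal_l, (cderiv_comp cexp); [apply cderiv_cexp|apply Ht].
    - ring. }
  pose proof (cderiv_comp _ _ _ _ _ (Hf _) Hinner) as Hlhs.
  assert (Hrhs : cderiv (fun z => f (g z) + cexp (L w + h z) * csin (cPI * w)) z
                   (g' z * f' (g z) + h' z * (cexp (L w + h z) * csin (cPI * w)))).
  { eapply cderiv_val_eq.
    - apply cderiv_plus.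
      + apply (cderiv_comp f); [apply Hf|apply Hg].
      + apply cderiv_mult; [|apply cderiv_const].
        apply (cderiv_comp cexp); [apply cderiv_cexp|].
        apply cderiv_plus; [apply cderiv_const|apply Hh].
    - cbv beta. ring. }
  apply (cderiv_ext _ _ _ _ (fun z => eq_sym (feq z w))) in Hrhs.
  rewrite (cderiv_unique _ _ _ _ Hlhs Hrhs). ring.
Qed.

End FunctionalEquation.

Theorem proposition3p30 (f g t h L : C -> C) :
  elh f -> ~ is_polynomial f -> elh g ->
  (exists h1 : C -> C, elh h1 /\ h1 <> g /\ (fun z => f (h1 z)) = (fun z => f (g z))) ->
  entire t -> entire h -> entire L ->
  (forall z w : C,
     f (g z + w * cexp (t z)) = f (g z) + cexp (L w + h z) * csin (cPI * w)) ->
  (forall L' : C -> C, has_cderiv L L' ->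
     forall w : C, L' w * csin (cPI * w) + cPI * ccos (cPI * w) <> 0)
  /\
  (forall f' g' h' t' : C -> C,
     has_cderiv f f' -> has_cderiv g g' -> has_cderiv h h' -> has_cderiv t t' ->
     exists c : C -> C, forall z w : C,
       - h' z * f (g z + w * cexp (t z))
       + (g' z + w * t' z * cexp (t z)) * f' (g z + w * cexp (t z)) = c z).
Proof.
  intros [f' [Hf' [Hf'_neq0 _]]] _ _ _ _ _ _ feq. split.
  - intros L' HL' w Hzero.
    apply (Cmult_neq_0 _ _ (cexp_neq0 (t 0)) (Hf'_neq0 (g 0 + w * cexp (t 0)))).
    rewrite (feq_cderiv_w _ _ _ _ _ feq f' L' 0 w Hf' HL'), Hzero. ring.
  - intros f'' g' h' t' Hf'' Hg' Hh' Ht'.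
    exists (fun z => g' z * f'' (g z) - h' z * f (g z)). intros z w.
    rewrite (feq_cderiv_z _ _ _ _ _ feq f'' g' h' t' z w Hf'' Hg' Hh' Ht'), feq. ring.
Qed.
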